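(* For every positive integer $l$ and every $n\ge 1$, the polynomial $\mathcal{A}_n^{(l)}(s,t)$ is symmetric in $s$ and $t$; equivalently, $\mathcal{A}^{(l)}(n,k)=\mathcal{A}^{(l)}(n,n-1-k)$ for $0\le k\le n-1$, i.e. the polynomial $\mathcal{A}_n^{(l)}(t)=\sum_{k=0}^{n-1}\mathcal{A}^{(l)}(n,k)t^k$ is palindromic.
   Context: A subexceedant function on $[n]$ is a map $f:[n]\to[n]$ with $1\le f(i)\le i$; its block leader set is $\mathrm{bl}(f)=\{i\in[n]: f(i)\notin f(\{1,\dots,i-1\})\}$. $\mathcal{A}^{(l)}(n,k)$ is the number of $l$-tuples $(f_1,\dots,f_l)$ of subexceedant functions on $[n]$ with $|\mathrm{bl}(f_1)|=k+1$ and $\mathrm{bl}(f_1)=\cdots=\mathrm{bl}(f_l)$. $\mathcal{A}_n^{(l)}(s,t)=\sum_{k=0}^{n-1}\mathcal{A}^{(l)}(n,k)s^kt^{n-1-k}$. *)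

From mathcomp Require Import all_boot.
Set Implicit Arguments. Unset Strict Implicit. Unset Printing Implicit Defensive.

(* Positions 1..n of the paper are encoded as 'I_n (position i+1 <-> i : 'I_n),
   values likewise; so f(i) <= i in the paper becomes  f i <= i  here. *)

Definition subexc (n : nat) (f : {ffun 'I_n -> 'I_n}) : bool :=
  [forall i : 'I_n, (f i <= i)%N].

Definition bl (n : nat) (f : {ffun 'I_n -> 'I_n}) : {set 'I_n} :=
  [set i : 'I_n | f i \notin f @: [set j : 'I_n | (j < i)%N]].

(* An l-tuple is an element of {ffun 'I_l -> {ffun 'I_n -> 'I_n}}; f_1 is F at index 0.
   (Meaningful for l >= 1.) *)
Definition Acount (l n k : nat) : nat :=
  #|[set F : {ffun 'I_l -> {ffun 'I_n -> 'I_n}} |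
      [forall i : 'I_l, subexc (F i)] &&
      [exists i0 : 'I_l, ((i0 : nat) == 0%N) &&
         (#|bl (F i0)| == k.+1) && [forall i : 'I_l, bl (F i) == bl (F i0)]]]|.

From mathcomp Require Import all_boot zify.
Set Implicit Arguments. Unset Strict Implicit. Unset Printing Implicit Defensive.

(* A subexceedant f with bl f = S is built position by position: at a leader
   i \in S the value f i <= i must avoid the #|S :&: [0, i)| values already taken,
   at a non-leader it must repeat one of them. Hence the number w(S) of such f is
   the product of the [choices S i], and A^(l)(n,k) is the sum of w(S)^l over
   #|S| = k+1. Only sets containing 0 have w(S) <> 0, and for those, complementing
   S away from 0 keeps every factor, because below i > 0 the two sets share only 0
   and so have i+1 elements in total; it turns k+1 elements into n-k. *)

Definition ltset N m : {set 'I_N} := [set j : 'I_N | j < m].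

Lemma ltset0 N : ltset N 0 = set0.
Proof. by apply/setP => x; rewrite !inE. Qed.

Lemma ltset_ge N m : N <= m -> ltset N m = setT.
Proof. by move=> h; apply/setP => x; rewrite !inE (leq_trans (ltn_ord x) h). Qed.

Lemma ltsetS N m (hm : m < N) : ltset N m.+1 = Ordinal hm |: ltset N m.
Proof. by apply/setP => x; rewrite !inE ltnS leq_eqVlt -val_eqE. Qed.

Lemma card_ltset N m : m <= N -> #|ltset N m| = m.
Proof.
elim: m => [|m IH] hm; first by rewrite ltset0 cards0.
by rewrite (ltsetS hm) cardsU1 inE ltnn IH // ltnW.
Qed.

Lemma in_bl N (f : {ffun 'I_N -> 'I_N}) i : (i \in bl f) = (f i \notin f @: ltset N i).
Proof. by rewrite inE. Qed.

Lemma card_imset_ltset N (f : {ffun 'I_N -> 'I_N}) m :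
  #|f @: ltset N m| = #|bl f :&: ltset N m|.
Proof.
elim: m => [|m IH]; first by rewrite ltset0 imset0 setI0 !cards0.
have [hm|hNm] := ltnP m N; last by rewrite !ltset_ge // ?(leq_trans hNm) in IH *.
rewrite (ltsetS hm) imsetU1 cardsU1 IH; set i := Ordinal hm.
have -> : (f i \notin f @: ltset N m) = (i \in bl f) by rewrite in_bl.
have [ibl|inbl] := boolP (i \in bl f).
- have -> : bl f :&: (i |: ltset N m) = i |: (bl f :&: ltset N m).
    by apply/setP => x; rewrite in_setI !in_setU1 in_setI; case: eqP => [->|_]; rewrite ?ibl.
  by rewrite cardsU1 in_setI [i \in ltset _ _]inE ltnn andbF.
- have -> // : bl f :&: (i |: ltset N m) = bl f :&: ltset N m.
  apply/setP => x; rewrite !in_setI in_setU1.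
  by case: eqP => [->|_]; rewrite ?(negbTE inbl).
Qed.

Definition ffun_upd (aT : finType) (rT : Type) (g : {ffun aT -> rT}) (i : aT) (v : rT) :
  {ffun aT -> rT} := [ffun j => if j == i then v else g j].

Lemma ffun_updE (aT : finType) (rT : Type) (g : {ffun aT -> rT}) i v j :
  ffun_upd g i v j = if j == i then v else g j.
Proof. by rewrite ffunE. Qed.

Lemma ffun_upd_upd (aT : finType) (rT : Type) (g : {ffun aT -> rT}) i v w :
  ffun_upd (ffun_upd g i v) i w = ffun_upd g i w.
Proof. by apply/ffunP => j; rewrite !ffun_updE; case: eqP. Qed.

Lemma ffun_upd_id (aT : finType) (rT : Type) (g : {ffun aT -> rT}) i :
  ffun_upd g i (g i) = g.
Proof. by apply/ffunP => j; rewrite ffun_updE; case: eqP => [->|]. Qed.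

Lemma ffun_upd_inj (aT : finType) (rT : Type) (g : {ffun aT -> rT}) i :
  injective (ffun_upd g i).
Proof. by move=> v w /ffunP/(_ i); rewrite !ffun_updE eqxx. Qed.

Section UpdateOrd.
Variables (N : nat) (g : {ffun 'I_N -> 'I_N}) (i v : 'I_N).

Lemma imset_upd_ltset m : m <= i -> ffun_upd g i v @: ltset N m = g @: ltset N m.
Proof.
move=> hm; apply: eq_in_imset => j; rewrite inE => hj.
by rewrite ffun_updE -val_eqE (ltn_eqF (leq_trans hj hm)).
Qed.

Lemma bl_upd_lt (j : 'I_N) : j < i -> (j \in bl (ffun_upd g i v)) = (j \in bl g).
Proof.
move=> hj; rewrite !in_bl imset_upd_ltset; last exact: ltnW.
by rewrite ffun_updE -val_eqE (ltn_eqF hj).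
Qed.

Lemma bl_upd : (i \in bl (ffun_upd g i v)) = (v \notin g @: ltset N i).
Proof. by rewrite in_bl imset_upd_ltset // ffun_updE eqxx. Qed.

End UpdateOrd.

Definition choices N (S : {set 'I_N}) (i : 'I_N) : nat :=
  if i \in S then i.+1 - #|S :&: ltset N i| else #|S :&: ltset N i|.

Definition admissible N (S : {set 'I_N}) (g : {ffun 'I_N -> 'I_N}) (i : 'I_N) :=
  [set v : 'I_N | (v <= i) && ((i \in S) == (v \notin g @: ltset N i))].

Lemma card_admissible N (S : {set 'I_N}) (g : {ffun 'I_N -> 'I_N}) (i : 'I_N) :
  subexc g -> #|g @: ltset N i| = #|S :&: ltset N i| ->
  #|admissible S g i| = choices S i.
Proof.
move=> /forallP g_sub cardU; set U := g @: ltset N i.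
have sub_U : U \subset ltset N i.+1.
  apply/subsetP => x /imsetP [j]; rewrite !inE => hj ->.
  by rewrite ltnS (leq_trans (g_sub j)) // ltnW.
rewrite /choices -cardU; case: ifP => iS.
- have -> : admissible S g i = ltset N i.+1 :\: U.
    by apply/setP => v; rewrite !inE iS andbC.
  by rewrite cardsD (setIidPr sub_U) card_ltset.
- have -> // : admissible S g i = U.
  apply/setP => v; rewrite inE iS; case: (boolP (v \in U)) => [vU|] /=; last by rewrite andbF.
  by move/subsetP: sub_U => /(_ v vU); rewrite inE ltnS => ->.
Qed.

Definition sexc_with_bl N (S : {set 'I_N}) :=
  [set f : {ffun 'I_N -> 'I_N} | subexc f && (bl f == S)].

Section TruncatedCount.
Variable n : nat.
Local Notation N := n.+1.

(* Stage m of the construction; extending by 0 from position m on keeps every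
   stage inside the single type {ffun 'I_N -> 'I_N}. *)
Definition trunc_sexc m (S : {set 'I_N}) := [set f : {ffun 'I_N -> 'I_N} | [&& subexc f,
   [forall i : 'I_N, (m <= i) ==> (f i == ord0)] &
   [forall i : 'I_N, (i < m) ==> ((i \in bl f) == (i \in S))]]].

Lemma trunc_sexcP m (S : {set 'I_N}) (f : {ffun 'I_N -> 'I_N}) : reflect
  [/\ forall i : 'I_N, f i <= i, forall i : 'I_N, m <= i -> f i = ord0
    & forall i : 'I_N, i < m -> (i \in bl f) = (i \in S)]
  (f \in trunc_sexc m S).
Proof.
rewrite inE; apply: (iffP and3P) => [[/forallP f_sub /forallP f0 /forallP f_bl]|[f_sub f0 f_bl]].
  by split=> i; [exact: f_sub | move/(implyP (f0 i))/eqP | move/(implyP (f_bl i))/eqP].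
by split; apply/forallP => i; [exact: f_sub | apply/implyP => /f0 -> | apply/implyP => /f_bl ->].
Qed.

Lemma trunc_sexc0 (S : {set 'I_N}) : trunc_sexc 0 S = [set [ffun=> ord0]].
Proof.
apply/setP => f; rewrite inE; apply/trunc_sexcP/eqP => [[_ f0 _]|->].
  by apply/ffunP => i; rewrite ffunE f0.
by split=> i; rewrite ?ffunE.
Qed.

Lemma trunc_sexcN (S : {set 'I_N}) : trunc_sexc N S = sexc_with_bl S.
Proof.
apply/setP => f; rewrite [RHS]inE; apply/trunc_sexcP/andP => [[f_sub _ f_bl]|[f_sub /eqP <-]].
  by split; [apply/forallP | apply/eqP/setP => i; apply: f_bl].
by split=> // i; [apply: (forallP f_sub) | rewrite leqNgt ltn_ord].
Qed.

Section Step.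
Variables (m : nat) (hm : m < N) (S : {set 'I_N}).
Local Notation i := (Ordinal hm).

Lemma trunc_sexc_reset f :
  f \in trunc_sexc m.+1 S -> ffun_upd f i ord0 \in trunc_sexc m S.
Proof.
case/trunc_sexcP=> f_sub f0 f_bl; apply/trunc_sexcP; split=> j; rewrite ?ffun_updE.
- by case: eqP.
- by case: eqP => // /eqP ne hj; apply: f0; rewrite ltn_neqAle eq_sym hj andbT.
- by move=> hj; rewrite bl_upd_lt // f_bl // ltnW.
Qed.

Lemma trunc_sexc_fiber g : g \in trunc_sexc m S ->
  [set f in trunc_sexc m.+1 S | ffun_upd f i ord0 == g] =
  ffun_upd g i @: admissible S g i.
Proof.
case/trunc_sexcP=> g_sub g0 g_bl; apply/setP => f; rewrite inE; apply/andP/imsetP.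
- case=> /trunc_sexcP [f_sub _ f_bl] /eqP <-.
  exists (f i); last by rewrite ffun_upd_upd ffun_upd_id.
  by rewrite inE f_sub imset_upd_ltset // -in_bl f_bl // eqxx.
- case=> v; rewrite inE => /andP [v_le v_bl] ->.
  rewrite ffun_upd_upd -[g in _ == g](ffun_upd_id g i) g0 //; split=> //.
  apply/trunc_sexcP; split=> j; rewrite ?ffun_updE.
  + by case: eqP => [->|_].
  + by case: eqP => [->|_ hj]; [rewrite ltnn | apply/g0/ltnW].
  + rewrite ltnS leq_eqVlt -[m]/(val i) val_eqE; case: eqP => [-> _|_ hj].
      by rewrite bl_upd (eqP v_bl).
    by rewrite bl_upd_lt // g_bl.
Qed.

Lemma card_trunc_sexcS : #|trunc_sexc m.+1 S| = #|trunc_sexc m S| * choices S i.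
Proof.
rewrite -sum1_card (partition_big (fun f => ffun_upd f i ord0) (mem (trunc_sexc m S))) /=;
  last exact: trunc_sexc_reset.
rewrite -sum_nat_const; apply: eq_bigr => g g_in.
have /trunc_sexcP [g_sub _ g_bl] := g_in.
have card_im : #|g @: ltset N i| = #|S :&: ltset N i|.
  rewrite card_imset_ltset; apply: eq_card => j; rewrite !in_setI [j \in ltset _ _]inE.
  by case: (ltnP j i) => hj; rewrite ?andbF ?g_bl.
rewrite sum1_card -(card_admissible _ card_im); last exact/forallP.
rewrite -(card_imset _ (@ffun_upd_inj _ _ g i)) -trunc_sexc_fiber //.
by apply: eq_card => f; rewrite inE.
Qed.

End Step.

Lemma card_trunc_sexc m S : m <= N -> #|trunc_sexc m S| = \prod_(i : 'I_N | i < m) choices S i.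
Proof.
elim: m => [_|m IH hm]; first by rewrite trunc_sexc0 cards1 big_pred0.
rewrite (card_trunc_sexcS hm) IH; last exact: ltnW.
rewrite [RHS](bigD1 (Ordinal hm)) //= mulnC.
by congr (_ * _); apply: eq_bigl => i; rewrite ltnS ltn_neqAle andbC -val_eqE.
Qed.

End TruncatedCount.

Lemma card_sexc_with_bl n (S : {set 'I_n.+1}) :
  #|sexc_with_bl S| = \prod_(i : 'I_n.+1) choices S i.
Proof. by rewrite -trunc_sexcN card_trunc_sexc //; apply: eq_bigl => i; rewrite ltn_ord. Qed.

Lemma Acount_sum l n k : 0 < l ->
  Acount l n k = \sum_(S : {set 'I_n} | #|S| == k.+1) #|sexc_with_bl S| ^ l.
Proof.
case: l => // l _; rewrite /Acount -sum1_card.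
rewrite (partition_big (fun F : {ffun 'I_l.+1 -> {ffun 'I_n -> 'I_n}} => bl (F ord0))
           (fun S : {set 'I_n} => #|S| == k.+1)) /=; last first.
  move=> F; rewrite inE => /andP [_ /existsP [i0 /andP [/andP [/eqP i0_0 card_bl] _]]].
  by have <- : i0 = ord0 by apply: val_inj.
apply: eq_bigr => S /eqP cardS; rewrite sum1_card.
transitivity #|@ffun_on_mem 'I_l.+1 _ (mem (sexc_with_bl S))|;
  last by rewrite card_ffun_on card_ord.
apply: eq_card => F; rewrite unfold_in /= inE; apply/andP/ffun_onP.
- case=> /andP [/forallP F_sub /existsP [i0 /andP [/andP [/eqP i0_0 _] /forallP F_bl]]] /eqP F0.
  have i0E : i0 = ord0 by apply: val_inj.
  by move=> i; rewrite inE F_sub (eqP (F_bl i)) i0E F0 eqxx.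
- move=> F_in; have {}F_in i : subexc (F i) && (bl (F i) == S) by have := F_in i; rewrite inE.
  have F0 : bl (F ord0) = S by case/andP: (F_in ord0) => _ /eqP.
  split; last by rewrite F0.
  apply/andP; split; first by apply/forallP => i; case/andP: (F_in i).
  apply/existsP; exists ord0; rewrite F0 cardS !eqxx /=.
  by apply/forallP => i; case/andP: (F_in i).
Qed.

Definition setCbut (T : finType) (z : T) (S : {set T}) : {set T} :=
  [set i | (i == z) == (i \in S)].

Lemma setCbutK (T : finType) (z : T) : involutive (setCbut z).
Proof. by move=> S; apply/setP => i; rewrite !inE; case: (i == z); case: (i \in S). Qed.

Lemma mem_setCbut (T : finType) (z : T) (S : {set T}) : (z \in setCbut z S) = (z \in S).
Proof. by rewrite inE eqxx; case: (z \in S). Qed.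

Lemma cards_setCbut (T : finType) (z : T) (S : {set T}) :
  z \in S -> #|setCbut z S| + #|S| = #|T|.+1.
Proof.
move=> zS; rewrite -cardsUI.
have -> : setCbut z S :|: S = setT.
  by apply/setP => i; rewrite !inE; case: (i =P z) => [->|_]; rewrite ?zS //; case: (i \in S).
have -> : setCbut z S :&: S = [set z].
  by apply/setP => i; rewrite !inE; case: (i =P z) => [->|_]; rewrite ?zS //; case: (i \in S).
by rewrite cardsT cards1 addn1.
Qed.

Lemma choices_ord0 n (S : {set 'I_n.+1}) : choices S ord0 = (ord0 \in S).
Proof. by rewrite /choices ltset0 setI0 cards0; case: (_ \in S). Qed.

Lemma choices_setCbut n (S : {set 'I_n.+1}) i :
  ord0 \in S -> choices (setCbut ord0 S) i = choices S i.
Proof.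
move=> S0; have [->|i_ne0] := eqVneq i ord0; first by rewrite !choices_ord0 mem_setCbut.
have i_gt0 : 0 < i by rewrite lt0n; move: i_ne0; rewrite -(inj_eq val_inj).
have split_ltset : #|S :&: ltset n.+1 i| + #|setCbut ord0 S :&: ltset n.+1 i| = i.+1.
  rewrite -cardsUI.
  have -> : (S :&: ltset n.+1 i) :|: (setCbut ord0 S :&: ltset n.+1 i) = ltset n.+1 i.
    apply/setP => x; rewrite !inE; case: (x =P ord0) => [->|_]; first by rewrite S0 i_gt0.
    by case: (x \in S); case: (x < i).
  have -> : (S :&: ltset n.+1 i) :&: (setCbut ord0 S :&: ltset n.+1 i) = [set ord0].
    apply/setP => x; rewrite !inE; case: (x =P ord0) => [->|_]; first by rewrite S0 i_gt0.
    by case: (x \in S); rewrite ?andbF.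
  by rewrite card_ltset ?cards1 ?addn1 // ltnW.
rewrite /choices inE (negbTE i_ne0) -split_ltset.
by case: (i \in S); rewrite /= ?addKn ?addnK.
Qed.

Lemma prod_choices_eq0 n (S : {set 'I_n.+1}) :
  ord0 \notin S -> \prod_(i : 'I_n.+1) choices S i = 0.
Proof. by move=> S0; rewrite (bigD1 ord0) //= choices_ord0 (negbTE S0). Qed.

Lemma sum_card_sexc_with_bl_sym n e a b : 0 < e -> a + b = n.+2 ->
  \sum_(S : {set 'I_n.+1} | #|S| == a) #|sexc_with_bl S| ^ e =
  \sum_(S : {set 'I_n.+1} | #|S| == b) #|sexc_with_bl S| ^ e.
Proof.
move=> e_gt0 ab; pose w S := (\prod_(i : 'I_n.+1) choices S i) ^ e.
have only_ord0 c : \sum_(S : {set 'I_n.+1} | #|S| == c) #|sexc_with_bl S| ^ e =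
    \sum_(S : {set 'I_n.+1} | (#|S| == c) && (ord0 \in S)) w S.
  rewrite (bigID (fun S : {set 'I_n.+1} => ord0 \in S)) /= [X in _ + X]big1 ?addn0.
    by apply: eq_bigr => S _; rewrite card_sexc_with_bl.
  by move=> S /andP [_ S0]; rewrite card_sexc_with_bl prod_choices_eq0 // exp0n.
rewrite !only_ord0 [RHS](reindex_inj (inv_inj (@setCbutK 'I_n.+1 ord0))).
apply: eq_big => S; last first.
  by case/andP=> _ S0; congr (_ ^ _); apply: eq_bigr => i _; rewrite choices_setCbut.
rewrite mem_setCbut; have [S0|] := boolP (ord0 \in S); rewrite ?andbF ?andbT //.
have := cards_setCbut S0; rewrite card_ord.
by move: #|S| #|setCbut ord0 S| => x y xy; apply/eqP/eqP; lia.
Qed.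

Theorem mainTheorem14 :
  forall (l n k : nat), (0 < l)%N -> (1 <= n)%N -> (k <= n - 1)%N ->
    Acount l n k = Acount l n (n - 1 - k).
Proof.
move=> l [|n] k l_gt0 // _ k_le.
rewrite !Acount_sum //; apply: sum_card_sexc_with_bl_sym => //; lia.
Qed.
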